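(* Let $(\rho,\theta)$ be a (contravariant) Real 2-representation of $G$ on a dg category $\mathcal C$, for a $C_2$-graded group $\pi:\hat G\to C_2$ with $G=\ker\pi$. (i) For each $\sigma\in\hat G\setminus G$, the following defines a dg duality structure $(\rho(\sigma),\Theta(\sigma))$ on $\mathcal C^G$: $\rho(\sigma)(C,u)=(\rho(\sigma)C,\{v_g\}_{g\in G})$ where $v_g=\theta_{g,\sigma}^{-1}\circ\theta_{\sigma,\sigma^{-1}g\sigma}\circ\rho(\sigma)(u^{-1}_{\sigma^{-1}g\sigma}):\rho(\sigma)C\to\rho(g)\rho(\sigma)C$, $\rho(\sigma)$ acting on morphisms as on $\mathcal C$, and $\Theta(\sigma)_{(C,u)}=\theta_{\sigma,\sigma}^{-1}\circ u_{\sigma^2}:C\to\rho(\sigma)\rho(\sigma)C$. (ii) For $\sigma_1,\sigma_2\in\hat G\setminus G$, let $\varphi^{\sigma_1,\sigma_2}_{(C,u)}=\rho(\sigma_2)(u_{\sigma_2^{-1}\sigma_1})\circ\theta^{-1}_{\sigma_2,\sigma_2^{-1}\sigma_1}:\rho(\sigma_1)C\to\rho(\sigma_2)C$. Then $(\mathrm{id}_{\mathcal C^G},\varphi^{\sigma_1,\sigma_2}):(\mathcal C^G,\rho(\sigma_1),\Theta(\sigma_1))\to(\mathcal C^G,\rho(\sigma_2),\Theta(\sigma_2))$ is a dg form equivalence, and for all $\sigma_1,\sigma_2,\sigma_3\in\hat G\setminus G$ one has $(\mathrm{id},\varphi^{\sigma_1,\sigma_3})=(\mathrm{id},\varphi^{\sigma_2,\sigma_3})\circ(\mathrm{id},\varphi^{\sigma_1,\sigma_2})$.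 In particular $\mathcal C^G$ inherits a canonical equivalence class of dg duality structures.
   Context: $k$ is a field with $\mathrm{char}\,k\ne2$; dg categories are $k$-linear and 2-periodic ($\mathbb Z/2$-graded); dg natural isomorphisms have closed degree-0 components. For $\epsilon\in C_2=\{\pm1\}$, ${}^{\epsilon}\mathcal C$ is $\mathcal C$ if $\epsilon=1$ and $\mathcal C^{op}$ if $\epsilon=-1$, similarly ${}^\epsilon F$ and ${}^\epsilon\theta$ for functors and natural transformations (the opposite of $\theta:F\Rightarrow G$ is $\theta^{op}:G^{op}\Rightarrow F^{op}$); for a natural isomorphism, $\theta^{\epsilon}$ is $\theta$ if $\epsilon=1$ and $\theta^{-1}$ if $\epsilon=-1$; likewise $u^\epsilon$ for isomorphisms. Contravariant Real 2-representation of $G$ on $\mathcal C$: dg functors $\rho(\sigma):{}^{\pi(\sigma)}\mathcal C\to\mathcal C$, natural isomorphisms $\theta_{\sigma_2,\sigma_1}:\rho(\sigma_2)\circ{}^{\pi(\sigma_2)}\rho(\sigma_1)\Rightarrow\rho(\sigma_2\sigma_1)$ and $\theta_e:\rho(e)\Rightarrow\mathrm{id}$, with $\theta_{\sigma_3\sigma_2,\sigma_1}\circ(\theta_{\sigma_3,\sigma_2}\circ\mathrm{id})=\theta_{\sigma_3,\sigma_2\sigma_1}\circ(\mathrm{id}_{\rho(\sigma_3)}\circ{}^{\pi(\sigma_3)}\theta^{\pi(\sigma_3)}_{\sigma_2,\sigma_1})$ and unit conditions $\theta_{e,\sigma}=\theta_e\circ\mathrm{id}_{\rho(\sigma)}$,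 $\theta_{\sigma,e}=\mathrm{id}_{\rho(\sigma)}\circ{}^{\pi(\sigma)}\theta_e$. $\mathcal C^G$ is the homotopy fixed point category of the restriction to $G$: objects $(C,u)$ with dg isomorphisms $u_g:C\to\rho(g)C$ ($g\in G$), $u_{g_2g_1}=\theta_{g_2,g_1}\circ\rho(g_2)(u_{g_1})\circ u_{g_2}$; morphisms $f$ with $u'_gf=\rho(g)(f)u_g$. A dg category with duality $(\mathcal C,P,\Theta)$: dg functor $P:\mathcal C^{op}\to\mathcal C$ and dg natural isomorphism $\Theta:\mathrm{id}\Rightarrow P\circ P^{op}$ with $P(\Theta_C)\circ\Theta_{P(C)}=\mathrm{id}_{P(C)}$. A dg form functor $(T,\varphi):(\mathcal C,P,\Theta)\to(\mathcal D,Q,\Xi)$: dg functor $T$ and dg natural transformation $\varphi:T\circ P\Rightarrow Q\circ T^{op}$ with $Q(\varphi_C)\circ\Xi_{T(C)}=\varphi_{P(C)}\circ T(\Theta_C)$; composition $(S,\psi)\circ(T,\varphi)=(S\circ T,\psi\star\varphi)$ with $(\psi\star\varphi)_C=\psi_{T(C)}\circ S(\varphi_C)$. A dg form equivalence is a dg form functor whose underlying functor is an equivalence and $\varphi$ an isomorphism. *)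

From HB Require Import structures.
From mathcomp Require Import all_boot all_order all_algebra.
From Stdlib Require Import ClassicalEpsilon.
Set Implicit Arguments. Unset Strict Implicit. Unset Printing Implicit Defensive.
Import GRing.Theory.
Local Open Scope ring_scope.

(* Objects are the elements [A : Obj] with [ob A]; all morphisms live in one
   k-module [Mor]; [hom A B f] says f : A -> B; [deg i f] says f is
   homogeneous of degree i in Z/2 (false = even, true = odd). *)
Record dgcat (k : fieldType) := DGCat {
  Obj : Type;
  ob : Obj -> Prop;
  Mor : lmodType k;
  hom : Obj -> Obj -> Mor -> Prop;
  deg : bool -> Mor -> Prop;
  comp : Mor -> Mor -> Mor;   (* comp f g = f o g *)
  idm : Obj -> Mor;
  dif : Mor -> Mor }.
Arguments Obj {k} d.
Arguments ob {k} d _.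
Arguments Mor {k} d.
Arguments hom {k} d _ _ _.
Arguments deg {k} d _ _.
Arguments comp {k} d _ _.
Arguments idm {k} d _.
Arguments dif {k} d _.

Record is_dgcat (k : fieldType) (D : dgcat k) : Prop := {
  hom0 : forall A B, ob D A -> ob D B -> hom D A B 0;
  homD : forall A B f g, ob D A -> ob D B -> hom D A B f -> hom D A B g ->
           hom D A B (f + g);
  homZ : forall A B (a : k) f, ob D A -> ob D B -> hom D A B f ->
           hom D A B (a *: f);
  deg0 : forall i, deg D i 0;
  degD : forall i f g, deg D i f -> deg D i g -> deg D i (f + g);
  degZ : forall i (a : k) f, deg D i f -> deg D i (a *: f);
  deg_decomp : forall A B f, ob D A -> ob D B -> hom D A B f ->
    exists f0 f1, [/\ hom D A B f0, deg D false f0, hom D A B f1,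
                      deg D true f1 & f = f0 + f1];
  deg_disj : forall A B f, ob D A -> ob D B -> hom D A B f ->
    deg D false f -> deg D true f -> f = 0;
  comp_hom : forall A B C f g, ob D A -> ob D B -> ob D C ->
    hom D B C f -> hom D A B g -> hom D A C (comp D f g);
  comp_deg : forall A B C i j f g, ob D A -> ob D B -> ob D C ->
    hom D B C f -> hom D A B g -> deg D i f -> deg D j g ->
    deg D (i (+) j) (comp D f g);
  compDl : forall A B C f f' g, ob D A -> ob D B -> ob D C ->
    hom D B C f -> hom D B C f' -> hom D A B g ->
    comp D (f + f') g = comp D f g + comp D f' g;
  compDr : forall A B C f g g', ob D A -> ob D B -> ob D C ->
    hom D B C f -> hom D A B g -> hom D A B g' ->
    comp D f (g + g') = comp D f g + comp D f g';
  compZl : forall A B C (a : k) f g, ob D A -> ob D B -> ob D C ->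
    hom D B C f -> hom D A B g -> comp D (a *: f) g = a *: comp D f g;
  compZr : forall A B C (a : k) f g, ob D A -> ob D B -> ob D C ->
    hom D B C f -> hom D A B g -> comp D f (a *: g) = a *: comp D f g;
  compA : forall A B C E f g h, ob D A -> ob D B -> ob D C -> ob D E ->
    hom D C E f -> hom D B C g -> hom D A B h ->
    comp D f (comp D g h) = comp D (comp D f g) h;
  id_hom : forall A, ob D A -> hom D A A (idm D A);
  id_deg : forall A, ob D A -> deg D false (idm D A);
  comp1l : forall A B f, ob D A -> ob D B -> hom D A B f -> comp D (idm D B) f = f;
  comp1r : forall A B f, ob D A -> ob D B -> hom D A B f -> comp D f (idm D A) = f;
  dif_hom : forall A B f, ob D A -> ob D B -> hom D A B f -> hom D A B (dif D f);
  difD : forall A B f g, ob D A -> ob D B -> hom D A B f -> hom D A B g ->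
    dif D (f + g) = dif D f + dif D g;
  difZ : forall A B (a : k) f, ob D A -> ob D B -> hom D A B f ->
    dif D (a *: f) = a *: dif D f;
  dif_deg : forall A B i f, ob D A -> ob D B -> hom D A B f -> deg D i f ->
    deg D (~~ i) (dif D f);
  difK : forall A B f, ob D A -> ob D B -> hom D A B f -> dif D (dif D f) = 0;
  dif_comp : forall A B C i f g, ob D A -> ob D B -> ob D C ->
    hom D B C f -> hom D A B g -> deg D i f ->
    dif D (comp D f g) = comp D (dif D f) g + (-1) ^+ i *: comp D f (dif D g) }.

Definition closed0 (k : fieldType) (D : dgcat k) A B (f : Mor D) : Prop :=
  [/\ hom D A B f, deg D false f & dif D f = 0].
Arguments closed0 {k} D A B f.
Definition is_inv (k : fieldType) (D : dgcat k) A B (f g : Mor D) : Prop :=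
  [/\ hom D B A g, comp D g f = idm D A & comp D f g = idm D B].
Arguments is_inv {k} D A B f g.
Definition dgiso (k : fieldType) (D : dgcat k) A B (f : Mor D) : Prop :=
  closed0 D A B f /\ exists g, is_inv D A B f g.
Arguments dgiso {k} D A B f.
(* the inverse of f : A -> B (a junk value if f is not invertible) *)
Definition invm (k : fieldType) (D : dgcat k) (A B : Obj D) (f : Mor D) : Mor D :=
  epsilon (inhabits 0) (is_inv D A B f).
Arguments invm {k} D A B f.
(* theta^eps for theta : A -> B, eps = true meaning eps = -1 *)
Definition tpow (k : fieldType) (D : dgcat k) (e : bool) (A B : Obj D) (f : Mor D) :=
  if e then invm D A B f else f.
Arguments tpow {k} D e A B f.

(* e = false : covariant functor C -> D;  e = true : dg functor C^op -> D,
   where C^op has Koszul-signed composition g o^op f = (-1)^{|f||g|} f o g. *)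
Definition vs (e : bool) (T : Type) (A B : T) := if e then B else A.
Definition vt (e : bool) (T : Type) (A B : T) := if e then A else B.

Record is_dgfun (k : fieldType) (e : bool) (C D : dgcat k)
    (Fo : Obj C -> Obj D) (Fm : Mor C -> Mor D) : Prop := {
  fun_ob : forall A, ob C A -> ob D (Fo A);
  fun_hom : forall A B f, ob C A -> ob C B -> hom C A B f ->
    hom D (Fo (vs e A B)) (Fo (vt e A B)) (Fm f);
  fun_D : forall A B f g, ob C A -> ob C B -> hom C A B f -> hom C A B g ->
    Fm (f + g) = Fm f + Fm g;
  fun_Z : forall A B (a : k) f, ob C A -> ob C B -> hom C A B f ->
    Fm (a *: f) = a *: Fm f;
  fun_deg : forall A B i f, ob C A -> ob C B -> hom C A B f -> deg C i f ->
    deg D i (Fm f);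
  fun_dif : forall A B f, ob C A -> ob C B -> hom C A B f ->
    Fm (dif C f) = dif D (Fm f);
  fun_id : forall A, ob C A -> Fm (idm C A) = idm D (Fo A);
  fun_comp : forall A B E i j f g, ob C A -> ob C B -> ob C E ->
    hom C B E f -> hom C A B g -> deg C i f -> deg C j g ->
    Fm (comp C f g) = if e then (-1) ^+ (i && j) *: comp D (Fm g) (Fm f)
                      else comp D (Fm f) (Fm g) }.
Arguments is_dgfun {k} e C D Fo Fm.

Record is_dgnat (k : fieldType) (e : bool) (C D : dgcat k)
    (Fo : Obj C -> Obj D) (Fm : Mor C -> Mor D)
    (Go : Obj C -> Obj D) (Gm : Mor C -> Mor D) (eta : Obj C -> Mor D) : Prop := {
  nat_closed : forall A, ob C A -> closed0 D (Fo A) (Go A) (eta A);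
  nat_natural : forall A B f, ob C A -> ob C B -> hom C A B f ->
    comp D (eta (vt e A B)) (Fm f) = comp D (Gm f) (eta (vs e A B)) }.
Arguments is_dgnat {k} e C D Fo Fm Go Gm eta.

Definition is_dgnatiso (k : fieldType) (e : bool) (C D : dgcat k)
    (Fo : Obj C -> Obj D) (Fm : Mor C -> Mor D)
    (Go : Obj C -> Obj D) (Gm : Mor C -> Mor D) (eta : Obj C -> Mor D) : Prop :=
  is_dgnat e C D Fo Fm Go Gm eta /\ forall A, ob C A -> dgiso D (Fo A) (Go A) (eta A).
Arguments is_dgnatiso {k} e C D Fo Fm Go Gm eta.

Definition is_dgequiv (k : fieldType) (C D : dgcat k)
    (To : Obj C -> Obj D) (Tm : Mor C -> Mor D) : Prop :=
  [/\ is_dgfun false C D To Tm,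
      (forall A B f', ob C A -> ob C B -> hom D (To A) (To B) f' ->
         exists! f, hom C A B f /\ Tm f = f')
    & (forall B', ob D B' -> exists A, ob C A /\ exists f, dgiso D (To A) B' f)].
Arguments is_dgequiv {k} C D To Tm.

Definition is_duality (k : fieldType) (D : dgcat k)
    (Po : Obj D -> Obj D) (Pm : Mor D -> Mor D) (Th : Obj D -> Mor D) : Prop :=
  [/\ is_dgfun true D D Po Pm,
      is_dgnatiso false D D (fun A => A) (fun f => f)
                  (fun A => Po (Po A)) (fun f => Pm (Pm f)) Th
    & forall A, ob D A -> comp D (Pm (Th A)) (Th (Po A)) = idm D (Po A)].
Arguments is_duality {k} D Po Pm Th.

Definition is_form_fun (k : fieldType) (C D : dgcat k)
    (Po : Obj C -> Obj C) (Pm : Mor C -> Mor C) (Th : Obj C -> Mor C)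
    (Qo : Obj D -> Obj D) (Qm : Mor D -> Mor D) (Xi : Obj D -> Mor D)
    (To : Obj C -> Obj D) (Tm : Mor C -> Mor D) (phi : Obj C -> Mor D) : Prop :=
  [/\ is_dgfun false C D To Tm,
      is_dgnat true C D (fun A => To (Po A)) (fun f => Tm (Pm f))
                        (fun A => Qo (To A)) (fun f => Qm (Tm f)) phi
    & forall A, ob C A ->
        comp D (Qm (phi A)) (Xi (To A)) = comp D (phi (Po A)) (Tm (Th A))].
Arguments is_form_fun {k} C D Po Pm Th Qo Qm Xi To Tm phi.

Definition is_form_equiv (k : fieldType) (C D : dgcat k)
    (Po : Obj C -> Obj C) (Pm : Mor C -> Mor C) (Th : Obj C -> Mor C)
    (Qo : Obj D -> Obj D) (Qm : Mor D -> Mor D) (Xi : Obj D -> Mor D)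
    (To : Obj C -> Obj D) (Tm : Mor C -> Mor D) (phi : Obj C -> Mor D) : Prop :=
  [/\ is_form_fun C D Po Pm Th Qo Qm Xi To Tm phi,
      is_dgequiv C D To Tm
    & forall A, ob C A -> dgiso D (To (Po A)) (Qo (To A)) (phi A)].
Arguments is_form_equiv {k} C D Po Pm Th Qo Qm Xi To Tm phi.

(* natural-transformation part of (S,psi) o (T,phi): (psi * phi)_A = psi_{T A} o S(phi_A) *)
Definition form_comp_nt (k : fieldType) (C E : dgcat k) (D : dgcat k)
    (To : Obj C -> Obj D) (Sm : Mor D -> Mor E)
    (psi : Obj D -> Mor E) (phi : Obj C -> Mor D) : Obj C -> Mor E :=
  fun A => comp E (psi (To A)) (Sm (phi A)).
Arguments form_comp_nt {k} C E D To Sm psi phi.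

(* gpi x = true means pi(x) = -1 *)
Record c2group := C2Group {
  gcar : Type;
  gmul : gcar -> gcar -> gcar;
  gone : gcar;
  ginv : gcar -> gcar;
  gpi : gcar -> bool }.
Arguments gmul : clear implicits.
Arguments gone : clear implicits.
Arguments ginv : clear implicits.
Arguments gpi : clear implicits.

Record is_c2group (Gh : c2group) : Prop := {
  gmulA : forall x y z, gmul Gh x (gmul Gh y z) = gmul Gh (gmul Gh x y) z;
  gmul1l : forall x, gmul Gh (gone Gh) x = x;
  gmul1r : forall x, gmul Gh x (gone Gh) = x;
  gmulVl : forall x, gmul Gh (ginv Gh x) x = gone Gh;
  gmulVr : forall x, gmul Gh x (ginv Gh x) = gone Gh;
  gpiM : forall x y, gpi Gh (gmul Gh x y) = gpi Gh x (+) gpi Gh y }.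

Definition Gsub (Gh : c2group) := {x : gcar Gh | ~~ gpi Gh x}.

Record r2rep (k : fieldType) (C : dgcat k) (Gh : c2group) := R2Rep {
  rho_o : gcar Gh -> Obj C -> Obj C;
  rho_m : gcar Gh -> Mor C -> Mor C;
  theta : gcar Gh -> gcar Gh -> Obj C -> Mor C;   (* theta s2 s1 A *)
  theta_e : Obj C -> Mor C }.
Arguments rho_o {k C Gh} r _ _.
Arguments rho_m {k C Gh} r _ _.
Arguments theta {k C Gh} r _ _ _.
Arguments theta_e {k C Gh} r _.

Record is_r2rep (k : fieldType) (C : dgcat k) (Gh : c2group) (R : r2rep C Gh) : Prop := {
  r2_fun : forall s, is_dgfun (gpi Gh s) C C (rho_o R s) (rho_m R s);
  r2_theta : forall s2 s1,
    is_dgnatiso (gpi Gh (gmul Gh s2 s1)) C C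
      (fun A => rho_o R s2 (rho_o R s1 A)) (fun f => rho_m R s2 (rho_m R s1 f))
      (rho_o R (gmul Gh s2 s1)) (rho_m R (gmul Gh s2 s1)) (theta R s2 s1);
  r2_theta_e : is_dgnatiso false C C (rho_o R (gone Gh)) (rho_m R (gone Gh))
                 (fun A => A) (fun f => f) (theta_e R);
  r2_assoc : forall s3 s2 s1 A, ob C A ->
    comp C (theta R (gmul Gh s3 s2) s1 A) (theta R s3 s2 (rho_o R s1 A)) =
    comp C (theta R s3 (gmul Gh s2 s1) A)
      (rho_m R s3 (tpow C (gpi Gh s3) (rho_o R s2 (rho_o R s1 A))
                          (rho_o R (gmul Gh s2 s1) A) (theta R s2 s1 A)));
  r2_unitl : forall s A, ob C A -> theta R (gone Gh) s A = theta_e R (rho_o R s A);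
  r2_unitr : forall s A, ob C A ->
    theta R s (gone Gh) A =
    rho_m R s (tpow C (gpi Gh s) (rho_o R (gone Gh) A) A (theta_e R A)) }.

Section Fix.
Variables (k : fieldType) (C : dgcat k) (Gh : c2group) (R : r2rep C Gh).

(* u_x for x in Ghat (0 if x is not in G) *)
Definition gat (u : Gsub Gh -> Mor C) (x : gcar Gh) : Mor C :=
  if insub x is Some h then u h else 0.

Definition hfp (X : Obj C * (Gsub Gh -> Mor C)) : Prop :=
  [/\ ob C X.1,
      (forall g : Gsub Gh, dgiso C X.1 (rho_o R (val g) X.1) (X.2 g))
    & (forall g2 g1 : Gsub Gh,
         gat X.2 (gmul Gh (val g2) (val g1)) =
         comp C (theta R (val g2) (val g1) X.1)
                (comp C (rho_m R (val g2) (X.2 g1)) (X.2 g2)))].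

Definition fixcat : dgcat k := {|
  Obj := Obj C * (Gsub Gh -> Mor C);
  ob := hfp;
  Mor := Mor C;
  hom := fun X Y f => hom C X.1 Y.1 f /\
           forall g : Gsub Gh, comp C (Y.2 g) f = comp C (rho_m R (val g) f) (X.2 g);
  deg := deg C;
  comp := comp C;
  idm := fun X => idm C X.1;
  dif := dif C |}.

Definition Pobj (s : gcar Gh) (X : Obj C * (Gsub Gh -> Mor C)) :
    Obj C * (Gsub Gh -> Mor C) :=
  (rho_o R s X.1,
   fun g : Gsub Gh =>
     let h := gmul Gh (ginv Gh s) (gmul Gh (val g) s) in
     comp C (invm C (rho_o R (val g) (rho_o R s X.1))
                    (rho_o R (gmul Gh (val g) s) X.1) (theta R (val g) s X.1))
       (comp C (theta R s h X.1)
          (rho_m R s (invm C X.1 (rho_o R h X.1) (gat X.2 h))))).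

Definition Theta (s : gcar Gh) (X : Obj C * (Gsub Gh -> Mor C)) : Mor C :=
  comp C (invm C (rho_o R s (rho_o R s X.1)) (rho_o R (gmul Gh s s) X.1)
                 (theta R s s X.1))
         (gat X.2 (gmul Gh s s)).

Definition phi (s1 s2 : gcar Gh) (X : Obj C * (Gsub Gh -> Mor C)) : Mor C :=
  let t := gmul Gh (ginv Gh s2) s1 in
  comp C (rho_m R s2 (gat X.2 t))
         (invm C (rho_o R s2 (rho_o R t X.1)) (rho_o R (gmul Gh s2 t) X.1)
                 (theta R s2 t X.1)).

End Fix.

From Pilot Require Import Defs.
From HB Require Import structures.
From mathcomp Require Import all_boot all_order all_algebra.
From Stdlib Require Import ClassicalEpsilon.
Set Implicit Arguments. Unset Strict Implicit. Unset Printing Implicit Defensive.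
Import GRing.Theory.
Local Notation hom := Defs.hom.
Local Notation comp := Defs.comp.
Local Notation idm := Defs.idm.
Local Open Scope ring_scope.

(** Every identity in the theorem is an equation between composites of the
  structure isomorphisms [theta], their inverses, the components [u_g] of the
  fixed points and their images under the functors [rho(s)].  All of them are
  proved by the same calculus: rewriting with naturality of [theta], the
  associativity square of [theta] (read in its four invertible forms), the
  cocycle condition of [u], and cancellation of inverse pairs.  The only
  bookkeeping is the variance of [rho(s)], which reverses composition exactly
  when [pi s = -1]; since every structure morphism is closed of degree 0, the
  Koszul signs never appear. *)

Section C2Group.
Variable Gh : c2group.
Hypothesis HG : is_c2group Gh.
Local Notation "x * y" := (gmul Gh x y).
Local Notation gi := (ginv Gh).

Lemma gmulK x y : x * y * gi y = x.
Proof. by rewrite -(gmulA HG) (gmulVr HG) (gmul1r HG). Qed.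

Lemma gmulKV x y : x * gi y * y = x.
Proof. by rewrite -(gmulA HG) (gmulVl HG) (gmul1r HG). Qed.

Lemma ginv_unique x y : x * y = gone Gh -> gi x = y.
Proof. by move=> xy1; rewrite -[gi x](gmul1r HG) -xy1 (gmulA HG) (gmulVl HG) (gmul1l HG). Qed.

Lemma ginvM x y : gi (x * y) = gi y * gi x.
Proof. by apply: ginv_unique; rewrite (gmulA HG) gmulK (gmulVr HG). Qed.

Lemma ginvK x : gi (gi x) = x.
Proof. exact/ginv_unique/(gmulVl HG). Qed.

Lemma ginv1 : gi (gone Gh) = gone Gh.
Proof. exact/ginv_unique/(gmul1l HG). Qed.

Lemma gpi1 : gpi Gh (gone Gh) = false.
Proof. by have := gpiM HG (gone Gh) (gone Gh); rewrite (gmul1l HG); case: gpi. Qed.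

Lemma gpiV x : gpi Gh (gi x) = gpi Gh x.
Proof.
have := gpiM HG (gi x) x; rewrite (gmulVl HG) gpi1.
by case: (gpi Gh x); case: (gpi Gh (gi x)).
Qed.

End C2Group.

Section DgCategory.
Variables (k : fieldType) (C : dgcat k).
Hypothesis HC : is_dgcat C.
Local Notation "f ∘ g" := (comp C f g) (at level 38, right associativity).

Definition arrow A B f := [/\ ob C A, ob C B & hom C A B f].
Definition dgmor A B f := arrow A B f /\ deg C false f /\ dif C f = 0.
Definition invpair A B f g :=
  [/\ dgmor A B f, dgmor B A g, g ∘ f = idm C A & f ∘ g = idm C B].

Lemma dgmor_arrow A B f : dgmor A B f -> arrow A B f.
Proof. by case. Qed.

Lemma arrow_cast A B A' B' f : arrow A B f -> A = A' -> B = B' -> arrow A' B' f.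
Proof. by move=> ? <- <-. Qed.

Lemma dgmor_cast A B A' B' f : dgmor A B f -> A = A' -> B = B' -> dgmor A' B' f.
Proof. by move=> ? <- <-. Qed.

Lemma invpair_cast A B A' B' f g :
  invpair A B f g -> A = A' -> B = B' -> invpair A' B' f g.
Proof. by move=> ? <- <-. Qed.

Lemma invpair_sym A B f g : invpair A B f g -> invpair B A g f.
Proof. by case. Qed.

Lemma arrow_comp A B D f g : arrow B D f -> arrow A B g -> arrow A D (f ∘ g).
Proof. by case=> oB oD hf [oA _ hg]; split=> //; exact: (comp_hom HC oA oB oD). Qed.

Lemma comp0m A B D h : ob C A -> ob C B -> ob C D -> hom C A B h -> (0 : Mor C) ∘ h = 0.
Proof.
move=> oA oB oD hh; have h0 := hom0 HC oB oD.
have := compDl HC oA oB oD h0 h0 hh; rewrite addr0 -{1}[0 ∘ h]addr0.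
by move/addrI.
Qed.

Lemma compm0 A B D f : ob C A -> ob C B -> ob C D -> hom C B D f -> f ∘ (0 : Mor C) = 0.
Proof.
move=> oA oB oD hf; have h0 := hom0 HC oA oB.
have := compDr HC oA oB oD hf h0 h0; rewrite addr0 -{1}[f ∘ 0]addr0.
by move/addrI.
Qed.

Lemma dif_idm A : ob C A -> dif C (idm C A) = 0.
Proof.
move=> oA; have hi := id_hom HC oA; have hd := dif_hom HC oA oA hi.
have := dif_comp HC oA oA oA hi hi (id_deg HC oA).
rewrite (comp1l HC oA oA hi) expr0 scale1r (comp1r HC oA oA hd) (comp1l HC oA oA hd).
by rewrite -{1}[dif C _]addr0 => /addrI.
Qed.

Lemma dgmor_comp A B D f g : dgmor B D f -> dgmor A B g -> dgmor A D (f ∘ g).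
Proof.
case=> [[oB oD hf] [df xf]] [[oA _ hg] [dg xg]].
split; first by split=> //; exact: (comp_hom HC oA oB oD).
split; first exact: (comp_deg HC oA oB oD hf hg df dg).
rewrite (dif_comp HC oA oB oD hf hg df) xf xg expr0 scale1r.
by rewrite (comp0m oA oB oD hg) (compm0 oA oB oD hf) addr0.
Qed.

Lemma dgmor_idm A : ob C A -> dgmor A A (idm C A).
Proof.
by move=> oA; split; [split=> //; exact: id_hom | split; [exact: id_deg | exact: dif_idm]].
Qed.

Lemma compmA A B D E f g h :
  arrow D E f -> arrow B D g -> arrow A B h -> (f ∘ g) ∘ h = f ∘ g ∘ h.
Proof. by case=> oD oE hf [oB _ hg] [oA _ hh]; rewrite (Defs.compA HC oA oB oD oE). Qed.

Lemma comp1m A B f : arrow A B f -> idm C B ∘ f = f.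
Proof. by case=> oA oB; exact: comp1l. Qed.

Lemma compm1 A B f : arrow A B f -> f ∘ idm C A = f.
Proof. by case=> oA oB; exact: comp1r. Qed.

Lemma compm1_inj A B l r : arrow A B l -> arrow A B r -> l ∘ idm C A = r ∘ idm C A -> l = r.
Proof. by move=> hl hr; rewrite (compm1 hl) (compm1 hr). Qed.

(* An inverse of a closed degree-0 morphism is automatically closed of degree 0:
   its odd part is killed by [f], and [dif g] by the Leibniz rule. *)
Lemma inverse_dgmor A B f g :
  dgmor A B f -> arrow B A g -> g ∘ f = idm C A -> f ∘ g = idm C B -> dgmor B A g.
Proof.
move=> [[oA oB hf] [df xf]] [_ _ hg] gf fg.
have cancel_f x : hom C B A x -> f ∘ x = 0 -> x = 0.
  move=> hx fx0; rewrite -(comp1l HC oB oA hx) -gf -(Defs.compA HC oB oA oB oA) //.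
  by rewrite fx0 (compm0 oB oB oA).
have [g0 [g1 [hg0 dg0 hg1 dg1 eg]]] := deg_decomp HC oB oA hg.
have g1z : g1 = 0.
  apply: cancel_f => //; apply: (deg_disj HC oB oB (comp_hom HC oB oA oB hf hg1)).
    have -> : f ∘ g1 = idm C B - f ∘ g0.
      by rewrite -fg eg (compDr HC oB oA oB hf hg0 hg1) addrC addKr.
    apply: (degD HC); first exact: id_deg.
    by rewrite -scaleN1r; apply: (degZ HC); exact: (comp_deg HC oB oA oB hf hg0 df dg0).
  exact: (comp_deg HC oB oA oB hf hg1 df dg1).
have dg : deg C false g by rewrite eg g1z addr0.
split; first by split.
split=> //; apply: cancel_f; first exact: dif_hom.
have := dif_comp HC oB oA oB hf hg df.
by rewrite fg dif_idm // xf expr0 scale1r (comp0m oB oA oB hg) add0r.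
Qed.

Lemma dgiso_invpair A B f :
  ob C A -> ob C B -> dgiso C A B f -> invpair A B f (invm C A B f).
Proof.
move=> oA oB [[hf df xf] [g fg]].
have [hi gf ffg] : is_inv C A B f (invm C A B f).
  by rewrite /invm; apply: epsilon_spec; exists g.
have Cf : dgmor A B f by do !split.
by split=> //; exact: (inverse_dgmor Cf (And3 oB oA hi) gf ffg).
Qed.

Lemma invpair_dgiso A B f g : invpair A B f g -> dgiso C A B f.
Proof.
by case=> [[[? ? ?] [? ?]] [[? ? ?] _] gf fg]; split; [split | exists g; split].
Qed.

Lemma invpair_idl A B f g : invpair A B f g -> g ∘ f = idm C A.
Proof. by case. Qed.

Lemma invpair_compK A B D f g t : invpair A B f g -> arrow D A t -> g ∘ f ∘ t = t.
Proof.
move=> [[[oA oB hf] _] [[_ _ hg] _] gf _] [oD _ ht].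
by rewrite (Defs.compA HC oD oA oB oA) // gf (comp1l HC oD oA).
Qed.

Lemma invpair_compKV A B D f g t : invpair A B f g -> arrow D B t -> f ∘ g ∘ t = t.
Proof. by move/invpair_sym; exact: invpair_compK. Qed.

Lemma invpair_inj A B D f g x y :
  invpair A B f g -> arrow D A x -> arrow D A y -> f ∘ x = f ∘ y -> x = y.
Proof. by move=> P hx hy fxy; rewrite -(invpair_compK P hx) fxy (invpair_compK P hy). Qed.

Lemma invpair_invm A B f g : invpair A B f g -> g = invm C A B f.
Proof.
move=> P; have [[[oA oB hf] _] [[_ _ hg] _] _ fg] := P.
have [_ [[_ _ hi] _] if_ _] := dgiso_invpair oA oB (invpair_dgiso P).
rewrite -(comp1l HC oB oA hg) -if_ -(Defs.compA HC oB oA oB oA) // fg.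
exact: (comp1r HC oB oA hi).
Qed.

Lemma invpair_arrows A B f g : invpair A B f g -> arrow A B f /\ arrow B A g.
Proof. by rewrite /invpair; case=> Cf Cg _ _; split; apply: dgmor_arrow. Qed.

Lemma invpair_comp A B D f g f' g' :
  invpair A B f g -> invpair B D f' g' -> invpair A D (f' ∘ f) (g ∘ g').
Proof.
move=> P P'; have [af ag] := invpair_arrows P; have [af' ag'] := invpair_arrows P'.
have [Cf Cg gf _] := P; have [Cf' Cg' _ fg'] := P'.
split; [exact: (dgmor_comp Cf' Cf) | exact: (dgmor_comp Cg Cg') | |].
  by rewrite (compmA ag ag' (arrow_comp af' af)) (invpair_compK P' af).
by rewrite (compmA af' af (arrow_comp ag ag')) (invpair_compKV P ag').
Qed.

End DgCategory.

Section DgFunctor.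
Variables (k : fieldType) (C : dgcat k).
Hypothesis HC : is_dgcat C.
Local Notation "f ∘ g" := (comp C f g) (at level 38, right associativity).
Variables (e : bool) (Fo : Obj C -> Obj C) (Fm : Mor C -> Mor C).
Hypothesis HF : is_dgfun e C C Fo Fm.

Local Notation Fcomp f g := (if e then Fm g ∘ Fm f else Fm f ∘ Fm g).

Lemma fun0 A B : ob C A -> ob C B -> Fm 0 = 0.
Proof.
move=> oA oB; have h0 := hom0 HC oA oB.
by have := fun_D HF oA oB h0 h0; rewrite addr0 -{1}[Fm 0]addr0 => /addrI.
Qed.

Lemma fun_arrow A B f : arrow A B f -> arrow (Fo (vs e A B)) (Fo (vt e A B)) (Fm f).
Proof.
case=> oA oB hf; move: (fun_ob HF) (fun_hom HF oA oB hf).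
by case: e => oF hF; split; auto.
Qed.

Lemma fun_dgmor A B f : dgmor A B f -> dgmor (Fo (vs e A B)) (Fo (vt e A B)) (Fm f).
Proof.
case=> hf [df xf]; split; first exact: fun_arrow.
case: hf => oA oB hf; split; first exact: (fun_deg HF oA oB hf).
by rewrite -(fun_dif HF oA oB hf) xf (fun0 oA oB).
Qed.

Lemma fun_comp_evenl A B D i f g : ob C A -> ob C B -> ob C D ->
  hom C B D f -> deg C i f -> hom C A B g -> (e -> i = false) ->
  Fm (f ∘ g) = Fcomp f g.
Proof.
move=> oA oB oD hf df hg ei.
have [g0 [g1 [hg0 dg0 hg1 dg1 ->]]] := deg_decomp HC oA oB hg.
rewrite (compDr HC oA oB oD hf hg0 hg1).
rewrite (fun_D HF oA oD (comp_hom HC oA oB oD hf hg0) (comp_hom HC oA oB oD hf hg1)).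
rewrite (fun_comp HF oA oB oD hf hg0 df dg0) (fun_comp HF oA oB oD hf hg1 df dg1).
rewrite (fun_D HF oA oB hg0 hg1).
have hF := fun_hom HF; have oF := fun_ob HF.
move: hF ei; case: e => hF ei.
  rewrite (ei erefl) /= expr0 !scale1r.
  by rewrite (compDl HC (oF _ oD) (oF _ oB) (oF _ oA) (hF _ _ _ oA oB hg0)
                     (hF _ _ _ oA oB hg1) (hF _ _ _ oB oD hf)).
by rewrite (compDr HC (oF _ oA) (oF _ oB) (oF _ oD) (hF _ _ _ oB oD hf)
                   (hF _ _ _ oA oB hg0) (hF _ _ _ oA oB hg1)).
Qed.

Lemma fun_comp_evenr A B D j f g : ob C A -> ob C B -> ob C D ->
  hom C B D f -> hom C A B g -> deg C j g -> (e -> j = false) ->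
  Fm (f ∘ g) = Fcomp f g.
Proof.
move=> oA oB oD hf hg dg ej.
have [f0 [f1 [hf0 df0 hf1 df1 ->]]] := deg_decomp HC oB oD hf.
rewrite (compDl HC oA oB oD hf0 hf1 hg).
rewrite (fun_D HF oA oD (comp_hom HC oA oB oD hf0 hg) (comp_hom HC oA oB oD hf1 hg)).
rewrite (fun_comp HF oA oB oD hf0 hg df0 dg) (fun_comp HF oA oB oD hf1 hg df1 dg).
rewrite (fun_D HF oB oD hf0 hf1).
have hF := fun_hom HF; have oF := fun_ob HF.
move: hF ej; case: e => hF ej.
  rewrite (ej erefl) /= ?andbF expr0 !scale1r.
  by rewrite (compDr HC (oF _ oD) (oF _ oB) (oF _ oA) (hF _ _ _ oA oB hg)
                     (hF _ _ _ oB oD hf0) (hF _ _ _ oB oD hf1)).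
by rewrite (compDl HC (oF _ oA) (oF _ oB) (oF _ oD) (hF _ _ _ oB oD hf0)
                   (hF _ _ _ oB oD hf1) (hF _ _ _ oA oB hg)).
Qed.

Lemma fun_comp_cov A B D f g : e = false -> arrow B D f -> arrow A B g ->
  Fm (f ∘ g) = Fm f ∘ Fm g.
Proof.
move=> e0 [oB oD hf] [oA _ hg].
have [f0 [f1 [hf0 df0 hf1 df1 ->]]] := deg_decomp HC oB oD hf.
rewrite (compDl HC oA oB oD hf0 hf1 hg).
rewrite (fun_D HF oA oD (comp_hom HC oA oB oD hf0 hg) (comp_hom HC oA oB oD hf1 hg)).
rewrite (fun_comp_evenl oA oB oD hf0 df0 hg) ?e0 //.
rewrite (fun_comp_evenl oA oB oD hf1 df1 hg) ?e0 // (fun_D HF oB oD hf0 hf1).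
have hF := fun_hom HF; have oF := fun_ob HF; move: hF; rewrite e0 => hF.
by rewrite (compDl HC (oF _ oA) (oF _ oB) (oF _ oD) (hF _ _ _ oB oD hf0)
                   (hF _ _ _ oB oD hf1) (hF _ _ _ oA oB hg)).
Qed.

Lemma fun_comp_dgmorl A B D f g : dgmor B D f -> arrow A B g -> Fm (f ∘ g) = Fcomp f g.
Proof. by case=> [[oB oD hf] [df _]] [oA _ hg]; exact: (fun_comp_evenl oA oB oD hf df hg). Qed.

Lemma fun_comp_dgmorr A B D f g : arrow B D f -> dgmor A B g -> Fm (f ∘ g) = Fcomp f g.
Proof. by case=> oB oD hf [[oA _ hg] [dg _]]; exact: (fun_comp_evenr oA oB oD hf hg dg). Qed.

Lemma fun_invpair A B f g : invpair A B f g ->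
  if e then invpair (Fo A) (Fo B) (Fm g) (Fm f) else invpair (Fo A) (Fo B) (Fm f) (Fm g).
Proof.
case=> Cf Cg gf fg; have [[oA oB _] _] := Cf.
have C1 := fun_dgmor Cf; have C2 := fun_dgmor Cg.
have E1 := fun_comp_dgmorl Cg (dgmor_arrow Cf).
have E2 := fun_comp_dgmorl Cf (dgmor_arrow Cg).
rewrite gf (fun_id HF oA) in E1; rewrite fg (fun_id HF oB) in E2.
by move: C1 C2 E1 E2; case: e => /= C1 C2 E1 E2; split.
Qed.

End DgFunctor.

Section RealRepresentation.
Variables (k : fieldType) (C : dgcat k) (Gh : c2group) (R : r2rep C Gh).
Hypothesis HC : is_dgcat C.
Hypothesis HG : is_c2group Gh.
Hypothesis HR : is_r2rep R.
Local Notation "f ∘ g" := (comp C f g) (at level 38, right associativity).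
Local Notation "x * y" := (gmul Gh x y).
Local Notation ρ := (rho_o R).
Local Notation ρm := (rho_m R).
Local Notation θ := (theta R).
Local Notation gi := (ginv Gh).
Local Notation gp := (gpi Gh).

Definition thetaV a b A := invm C (ρ a (ρ b A)) (ρ (a * b) A) (θ a b A).

Definition uV (X : Obj C * (Gsub Gh -> Mor C)) x := invm C X.1 (ρ x X.1) (gat X.2 x).

Lemma ob_rho s A : ob C A -> ob C (ρ s A).
Proof. exact: (fun_ob (r2_fun HR s)). Qed.

Lemma gat_val (u : Gsub Gh -> Mor C) (g : Gsub Gh) : gat u (val g) = u g.
Proof. by rewrite /gat valK. Qed.

Lemma gat_Sub (u : Gsub Gh -> Mor C) x (px : ~~ gp x) : gat u x = u (Sub x px).
Proof. by rewrite /gat insubT. Qed.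

Lemma hfp_ob X : hfp R X -> ob C X.1. Proof. by case. Qed.

(* Typing lemmas give source and target as equations, so that [eapply] also
   applies to objects that agree only up to the group law. *)
Lemma arrow_rho_odd s A B A' B' f : gp s = true -> arrow A B f -> A' = ρ s B -> B' = ρ s A ->
  arrow A' B' (ρm s f).
Proof. move=> es hf -> ->; have := fun_arrow (r2_fun HR s) hf; by rewrite es. Qed.

Lemma arrow_rho_even s A B A' B' f : gp s = false -> arrow A B f -> A' = ρ s A -> B' = ρ s B ->
  arrow A' B' (ρm s f).
Proof. move=> es hf -> ->; have := fun_arrow (r2_fun HR s) hf; by rewrite es. Qed.

Lemma dgmor_rho_odd s A B A' B' f : gp s = true -> dgmor A B f -> A' = ρ s B -> B' = ρ s A ->
  dgmor A' B' (ρm s f).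
Proof. move=> es hf -> ->; have := fun_dgmor HC (r2_fun HR s) hf; by rewrite es. Qed.

Lemma dgmor_rho_even s A B A' B' f : gp s = false -> dgmor A B f -> A' = ρ s A -> B' = ρ s B ->
  dgmor A' B' (ρm s f).
Proof. move=> es hf -> ->; have := fun_dgmor HC (r2_fun HR s) hf; by rewrite es. Qed.

Lemma invpair_rho_odd s A B A' B' f g : gp s = true -> invpair A B f g -> A' = ρ s A ->
  B' = ρ s B ->
  invpair A' B' (ρm s g) (ρm s f).
Proof. move=> es hf -> ->; have := fun_invpair HC (r2_fun HR s) hf; by rewrite es. Qed.

Lemma invpair_rho_even s A B A' B' f g : gp s = false -> invpair A B f g -> A' = ρ s A ->
  B' = ρ s B ->
  invpair A' B' (ρm s f) (ρm s g).
Proof. move=> es hf -> ->; have := fun_invpair HC (r2_fun HR s) hf; by rewrite es. Qed.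

Lemma invpair_theta a b A A' B' : ob C A -> A' = ρ a (ρ b A) -> B' = ρ (a * b) A ->
  invpair A' B' (θ a b A) (thetaV a b A).
Proof.
move=> oA -> ->; apply: (dgiso_invpair HC); try by do ! apply: ob_rho.
exact: (proj2 (r2_theta HR a b) A oA).
Qed.

Lemma dgmor_theta a b A A' B' : ob C A -> A' = ρ a (ρ b A) -> B' = ρ (a * b) A ->
  dgmor A' B' (θ a b A).
Proof. by move=> oA e1 e2; case: (invpair_theta oA e1 e2). Qed.

Lemma dgmor_thetaV a b A A' B' : ob C A -> A' = ρ (a * b) A -> B' = ρ a (ρ b A) ->
  dgmor A' B' (thetaV a b A).
Proof. by move=> oA e1 e2; case: (invpair_theta oA e2 e1). Qed.

Lemma invpair_u X x A' B' : hfp R X -> gp x = false -> A' = X.1 -> B' = ρ x X.1 ->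
  invpair A' B' (gat X.2 x) (uV X x).
Proof.
move=> [oX Hi _] ex -> ->; have px : ~~ gp x by rewrite ex.
apply: (dgiso_invpair HC) => //; first exact: ob_rho.
rewrite (gat_Sub _ px); exact: (Hi (Sub x px)).
Qed.

Lemma dgmor_u X x A' B' : hfp R X -> gp x = false -> A' = X.1 -> B' = ρ x X.1 ->
  dgmor A' B' (gat X.2 x).
Proof. by move=> *; case: (@invpair_u X x A' B'). Qed.

Lemma dgmor_uV X x A' B' : hfp R X -> gp x = false -> A' = ρ x X.1 -> B' = X.1 ->
  dgmor A' B' (uV X x).
Proof. by move=> *; case: (@invpair_u X x B' A'). Qed.

Lemma arrow_idm_at A A' B' : ob C A -> A' = A -> B' = A -> arrow A' B' (idm C A).
Proof. move=> oA -> ->; apply: dgmor_arrow; exact: dgmor_idm. Qed.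

Lemma dgmor_idm_at A A' B' : ob C A -> A' = A -> B' = A -> dgmor A' B' (idm C A).
Proof. move=> oA -> ->; exact: dgmor_idm. Qed.

Lemma hfp_cocycle X x y xy : hfp R X -> gp x = false -> gp y = false -> x * y = xy ->
  gat X.2 xy = θ x y X.1 ∘ ρm x (gat X.2 y) ∘ gat X.2 x.
Proof.
move=> [oX _ Hc] ex ey <-; have px : ~~ gp x by rewrite ex.
have py : ~~ gp y by rewrite ey.
have := Hc (Sub x px) (Sub y py); by rewrite /= -(gat_Sub _ px) -(gat_Sub _ py).
Qed.

Ltac gsimpl := rewrite ?(ginvM HG) ?(ginvK HG) ?(ginv1 HG);
  repeat progress rewrite ?(gmulA HG) ?(gmulK HG) ?(gmulKV HG) ?(gmulVl HG) ?(gmulVr HG)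
                           ?(gmul1l HG) ?(gmul1r HG).

Ltac geq := first [reflexivity | gsimpl; reflexivity].

Ltac obj_eq := first [reflexivity | apply (f_equal2 (rho_o R)); [geq | obj_eq]].

Ltac gpi_solve := rewrite /= ?(gpiM HG) ?(gpiV HG) ?(gpi1 HG);
  repeat (match goal with H : gpi Gh ?x = _ |- context [gpi Gh ?x] => rewrite H end); done.

Ltac ob_solve := lazymatch goal with
  | |- ob C (rho_o R _ _) => apply ob_rho; ob_solve
  | |- _ => first [assumption | apply hfp_ob; assumption]
  end.

Ltac dgmor_solve := lazymatch goal with
  | |- dgmor _ _ (comp C _ _) => eapply (dgmor_comp HC); [dgmor_solve | dgmor_solve]
  | |- dgmor _ _ (rho_m R _ _) =>
      first [ eapply dgmor_rho_odd; [gpi_solve | dgmor_solve | obj_eq | obj_eq]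
            | eapply dgmor_rho_even; [gpi_solve | dgmor_solve | obj_eq | obj_eq] ]
  | |- dgmor _ _ (theta R _ _ _) => eapply dgmor_theta; [ob_solve | obj_eq | obj_eq]
  | |- dgmor _ _ (thetaV _ _ _) => eapply dgmor_thetaV; [ob_solve | obj_eq | obj_eq]
  | |- dgmor _ _ (gat _ _) => eapply dgmor_u; [eassumption | gpi_solve | obj_eq | obj_eq]
  | |- dgmor _ _ (uV _ _) => eapply dgmor_uV; [eassumption | gpi_solve | obj_eq | obj_eq]
  | |- dgmor _ _ (idm C _) => eapply dgmor_idm_at; [ob_solve | obj_eq | obj_eq]
  | |- dgmor _ _ _ => eapply dgmor_cast; [eassumption | obj_eq | obj_eq]
  end.

Ltac arrow_solve := lazymatch goal with
  | |- arrow _ _ (comp C _ _) => eapply (arrow_comp HC); [arrow_solve | arrow_solve]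
  | |- arrow _ _ (rho_m R _ _) =>
      first [ eapply arrow_rho_odd; [gpi_solve | arrow_solve | obj_eq | obj_eq]
            | eapply arrow_rho_even; [gpi_solve | arrow_solve | obj_eq | obj_eq] ]
  | |- arrow _ _ (idm C _) => eapply arrow_idm_at; [ob_solve | obj_eq | obj_eq]
  | |- arrow _ _ _ =>
      first [ eapply arrow_cast; [eassumption | obj_eq | obj_eq]
            | apply dgmor_arrow; dgmor_solve ]
  end.

Ltac invpair_solve := lazymatch goal with
  | |- invpair _ _ (theta R _ _ _) (thetaV _ _ _) =>
      eapply invpair_theta; [ob_solve | obj_eq | obj_eq]
  | |- invpair _ _ (thetaV _ _ _) (theta R _ _ _) => apply invpair_sym; invpair_solve
  | |- invpair _ _ (gat _ _) (uV _ _) =>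
      eapply invpair_u; [eassumption | gpi_solve | obj_eq | obj_eq]
  | |- invpair _ _ (uV _ _) (gat _ _) => apply invpair_sym; invpair_solve
  | |- invpair _ _ (rho_m R ?s _) (rho_m R ?s _) =>
       first [ eapply invpair_rho_even; [gpi_solve | invpair_solve | obj_eq | obj_eq]
             | eapply invpair_rho_odd; [gpi_solve | invpair_solve | obj_eq | obj_eq] ]
  | |- invpair _ _ _ _ =>
      first [ eapply invpair_cast; [eassumption | obj_eq | obj_eq]
            | apply invpair_sym; eapply invpair_cast; [eassumption | obj_eq | obj_eq] ]
  end.

Ltac side_solve :=
  first [ arrow_solve | dgmor_solve | invpair_solve | gpi_solve | ob_solve | geq
        | eassumption ].

Ltac only_main_goal := lazymatch goal with
  | |- arrow _ _ _ => fail 0 "unsolved side condition"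
  | |- dgmor _ _ _ => fail 0 "unsolved side condition"
  | |- invpair _ _ _ _ => fail 0 "unsolved side condition"
  | |- ob _ _ => fail 0 "unsolved side condition"
  | |- hfp _ _ => fail 0 "unsolved side condition"
  | |- is_true _ => fail 0 "unsolved side condition"
  | |- @eq bool _ _ => fail 0 "unsolved side condition"
  | |- @eq (gcar _) _ _ => fail 0 "unsolved side condition"
  | |- _ => idtac end.

(* [rw L] rewrites with [L], then discharges every typing side condition
   (arrows, closed morphisms, inverse pairs, parities, object identities); it
   fails if one of them remains. *)
Tactic Notation "rw" open_constr(L) := erewrite L; try solve [side_solve]; only_main_goal.

Tactic Notation "rwl" open_constr(L) := erewrite <- L; try solve [side_solve]; only_main_goal.

Lemma rho_comp_even s A B D f g : gp s = false -> arrow B D f -> arrow A B g ->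
  ρm s (f ∘ g) = ρm s f ∘ ρm s g.
Proof. move=> es; exact: (fun_comp_cov HC (r2_fun HR s)). Qed.

Lemma rho_comp_oddl s A B D f g : gp s = true -> dgmor B D f -> arrow A B g ->
  ρm s (f ∘ g) = ρm s g ∘ ρm s f.
Proof. move=> es hf hg; have := fun_comp_dgmorl HC (r2_fun HR s) hf hg; by rewrite es. Qed.

Lemma rho_comp_oddr s A B D f g : gp s = true -> arrow B D f -> dgmor A B g ->
  ρm s (f ∘ g) = ρm s g ∘ ρm s f.
Proof. move=> es hf hg; have := fun_comp_dgmorr HC (r2_fun HR s) hf hg; by rewrite es. Qed.

Lemma rho_idm s A : ob C A -> ρm s (idm C A) = idm C (ρ s A).
Proof. exact: (fun_id (r2_fun HR s)). Qed.

Ltac rho_expand := first [rw rho_comp_even | rw rho_comp_oddl | rw rho_comp_oddr | rw rho_idm].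

Ltac cancel_pair :=
  first [ match goal with |- context [comp C ?g (comp C ?f ?t)] =>
            erewrite (invpair_compK HC (f := f) (g := g) (t := t));
            [try reflexivity | invpair_solve | arrow_solve] end
        | match goal with |- context [comp C ?g ?f] =>
            erewrite (invpair_idl (f := f) (g := g)); [try reflexivity | invpair_solve] end ].

Ltac comp_simpl :=
  repeat first [ rho_expand | rw (compmA HC) | rw (comp1m HC) | cancel_pair
               | progress gsimpl ];
  try reflexivity.

(* Identities are proved with a trailing [∘ idm] appended: the lemmas below
   carry an arbitrary tail [∘ t], so they rewrite inside right-nested
   composites. *)
Ltac add_tail := eapply (compm1_inj HC); [arrow_solve | arrow_solve | ].

Ltac cancel_left f g :=
  eapply (invpair_inj HC (f := f) (g := g)); [invpair_solve | arrow_solve | arrow_solve |].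

(** * Naturality and associativity of theta *)

(* The case split fixes the parities of [a] and [b], which the typing
   automation needs to know. *)
Lemma theta_nat_even a b c A B D f t : gp (a * b) = false -> a * b = c -> arrow A B f ->
  arrow D (ρ a (ρ b A)) t ->
  θ a b B ∘ ρm a (ρm b f) ∘ t = ρm c f ∘ θ a b A ∘ t.
Proof.
move=> e ec hf ht; subst c; have [oA oB hf'] := hf.
have := nat_natural (proj1 (r2_theta HR a b)) oA oB hf'; rewrite e /= => E.
case ea: (gp a); case eb: (gp b); move: (e); rewrite (gpiM HG) ea eb // => _.
all: rwl (compmA HC (f := θ a b B)); rewrite E; rw (compmA HC).
Qed.

Lemma theta_nat_odd a b c A B D f t : gp (a * b) = true -> a * b = c -> arrow A B f ->
  arrow D (ρ a (ρ b B)) t ->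
  θ a b A ∘ ρm a (ρm b f) ∘ t = ρm c f ∘ θ a b B ∘ t.
Proof.
move=> e ec hf ht; subst c; have [oA oB hf'] := hf.
have := nat_natural (proj1 (r2_theta HR a b)) oA oB hf'; rewrite e /= => E.
case ea: (gp a); case eb: (gp b); move: (e); rewrite (gpiM HG) ea eb // => _.
all: rwl (compmA HC (f := θ a b A)); rewrite E; rw (compmA HC).
Qed.

Lemma thetaV_nat_even a b c A B D f t : gp (a * b) = false -> a * b = c -> arrow A B f ->
  arrow D (ρ c A) t ->
  thetaV a b B ∘ ρm c f ∘ t = ρm a (ρm b f) ∘ thetaV a b A ∘ t.
Proof.
move=> e ec hf ht; subst c; have [oA oB hf'] := hf.
case ea: (gp a); case eb: (gp b); move: (e); rewrite (gpiM HG) ea eb // => _.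
all: have -> : ρm (a * b) f ∘ t = ρm (a * b) f ∘ θ a b A ∘ thetaV a b A ∘ t
       by rw (invpair_compKV HC (f := θ a b A)).
all: rwl theta_nat_even; cancel_pair.
Qed.

Lemma thetaV_nat_odd a b c A B D f t : gp (a * b) = true -> a * b = c -> arrow A B f ->
  arrow D (ρ c B) t ->
  thetaV a b A ∘ ρm c f ∘ t = ρm a (ρm b f) ∘ thetaV a b B ∘ t.
Proof.
move=> e ec hf ht; subst c; have [oA oB hf'] := hf.
case ea: (gp a); case eb: (gp b); move: (e); rewrite (gpiM HG) ea eb // => _.
all: have -> : ρm (a * b) f ∘ t = ρm (a * b) f ∘ θ a b B ∘ thetaV a b B ∘ t
       by rw (invpair_compKV HC (f := θ a b B)).
all: rwl theta_nat_odd; cancel_pair.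
Qed.

(* [theta_assoc] is the associativity square of [theta]; the [Vl] and [Vr]
   variants invert the left and the right factor of its two sides, and
   [thetaV_assoc] inverts all four.  The suffix records the variance of [rho a]. *)
Lemma theta_assoc_even a b c ab bc A D t : gp a = false -> a * b = ab -> b * c = bc -> ob C A ->
  arrow D (ρ a (ρ b (ρ c A))) t ->
  θ ab c A ∘ θ a b (ρ c A) ∘ t = θ a bc A ∘ ρm a (θ b c A) ∘ t.
Proof.
move=> ea <- <- oA ht; have E := r2_assoc HR a b c oA; rewrite /tpow ea in E.
rwl (compmA HC (f := θ (a * b) c A)); rewrite E; rw (compmA HC).
Qed.

Lemma theta_assoc_odd a b c ab bc A D t : gp a = true -> a * b = ab -> b * c = bc -> ob C A ->
  arrow D (ρ a (ρ b (ρ c A))) t ->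
  θ ab c A ∘ θ a b (ρ c A) ∘ t = θ a bc A ∘ ρm a (thetaV b c A) ∘ t.
Proof.
move=> ea <- <- oA ht; have E := r2_assoc HR a b c oA.
rewrite /tpow ea in E; fold (thetaV b c A) in E.
rwl (compmA HC (f := θ (a * b) c A)); rewrite E; rw (compmA HC).
Qed.

Lemma theta_assoc_Vl_even a b c ab bc A D t : gp a = false -> a * b = ab -> b * c = bc -> ob C A ->
  arrow D (ρ (a * b) (ρ c A)) t ->
  ρm a (θ b c A) ∘ thetaV a b (ρ c A) ∘ t = thetaV a bc A ∘ θ ab c A ∘ t.
Proof.
move=> ea eab ebc oA ht; subst ab bc.
case eb: (gp b); case ec: (gp c).
all: cancel_left (θ a (b * c) A) (thetaV a (b * c) A); comp_simpl.
all: rwl (theta_assoc_even (a := a) (b := b) (c := c)); comp_simpl.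
Qed.

Lemma theta_assoc_Vl_odd a b c ab bc A D t : gp a = true -> a * b = ab -> b * c = bc -> ob C A ->
  arrow D (ρ (a * b) (ρ c A)) t ->
  ρm a (thetaV b c A) ∘ thetaV a b (ρ c A) ∘ t = thetaV a bc A ∘ θ ab c A ∘ t.
Proof.
move=> ea eab ebc oA ht; subst ab bc.
case eb: (gp b); case ec: (gp c).
all: cancel_left (θ a (b * c) A) (thetaV a (b * c) A); comp_simpl.
all: rwl (theta_assoc_odd (a := a) (b := b) (c := c)); comp_simpl.
Qed.

Lemma theta_assoc_Vr_even a b c ab bc A D t : gp a = false -> a * b = ab -> b * c = bc -> ob C A ->
  arrow D (ρ a (ρ bc A)) t ->
  θ a b (ρ c A) ∘ ρm a (thetaV b c A) ∘ t = thetaV ab c A ∘ θ a bc A ∘ t.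
Proof.
move=> ea eab ebc oA ht; subst ab bc.
case eb: (gp b); case ec: (gp c).
all: cancel_left (θ (a * b) c A) (thetaV (a * b) c A); comp_simpl.
all: rw (theta_assoc_even (a := a) (b := b) (c := c)); comp_simpl.
Qed.

Lemma theta_assoc_Vr_odd a b c ab bc A D t : gp a = true -> a * b = ab -> b * c = bc -> ob C A ->
  arrow D (ρ a (ρ bc A)) t ->
  θ a b (ρ c A) ∘ ρm a (θ b c A) ∘ t = thetaV ab c A ∘ θ a bc A ∘ t.
Proof.
move=> ea eab ebc oA ht; subst ab bc.
case eb: (gp b); case ec: (gp c).
all: cancel_left (θ (a * b) c A) (thetaV (a * b) c A); comp_simpl.
all: rw (theta_assoc_odd (a := a) (b := b) (c := c)); comp_simpl.
Qed.

Lemma thetaV_assoc_even a b c ab bc A D t : gp a = false -> a * b = ab -> b * c = bc -> ob C A ->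
  arrow D (ρ (a * bc) A) t ->
  ρm a (thetaV b c A) ∘ thetaV a bc A ∘ t = thetaV a b (ρ c A) ∘ thetaV ab c A ∘ t.
Proof.
move=> ea eab ebc oA ht; subst ab bc.
case eb: (gp b); case ec: (gp c).
all: cancel_left (θ a b (ρ c A)) (thetaV a b (ρ c A)); comp_simpl.
all: rw (theta_assoc_Vr_even (a := a) (b := b) (c := c)); comp_simpl.
Qed.

(** * Morphisms of homotopy fixed points *)

Lemma hfp_cocycleT X x y xy D t : hfp R X -> gp x = false -> gp y = false -> x * y = xy ->
  arrow D X.1 t ->
  θ x y X.1 ∘ ρm x (gat X.2 y) ∘ gat X.2 x ∘ t = gat X.2 xy ∘ t.
Proof.
move=> hX ex ey exy ht; have oX := hfp_ob hX.
rewrite (hfp_cocycle hX ex ey exy); subst xy; comp_simpl.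
Qed.

Lemma hfp_cocycleVT X x y xy D t : hfp R X -> gp x = false -> gp y = false -> x * y = xy ->
  arrow D X.1 t ->
  ρm x (gat X.2 y) ∘ gat X.2 x ∘ t = thetaV x y X.1 ∘ gat X.2 xy ∘ t.
Proof.
move=> hX ex ey exy ht; have oX := hfp_ob hX; subst xy.
cancel_left (θ x y X.1) (thetaV x y X.1); comp_simpl.
rw (hfp_cocycleT (X := X) (x := x) (y := y)); comp_simpl.
Qed.

Lemma hfp_cocycleV X x y xy : hfp R X -> gp x = false -> gp y = false -> x * y = xy ->
  ρm x (gat X.2 y) ∘ gat X.2 x = thetaV x y X.1 ∘ gat X.2 xy.
Proof.
move=> hX ex ey exy; have oX := hfp_ob hX; subst xy.
add_tail; comp_simpl; rw (hfp_cocycleVT (X := X) (x := x) (y := y)); comp_simpl.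
Qed.

Lemma uV_cocycle X x y xy : hfp R X -> gp x = false -> gp y = false -> x * y = xy ->
  uV X xy = uV X x ∘ ρm x (uV X y) ∘ thetaV x y X.1.
Proof.
move=> hX ex ey exy; have oX := hfp_ob hX; subst xy.
rewrite [LHS]/uV (hfp_cocycle hX ex ey erefl); apply/esym; apply: (invpair_invm HC).
erewrite <- (compmA HC (f := uV X x)); try solve [side_solve].
eapply (invpair_comp HC); [eapply (invpair_comp HC); invpair_solve | invpair_solve].
Qed.

Definition fixhom (X Y : Obj C * (Gsub Gh -> Mor C)) f :=
  arrow X.1 Y.1 f /\ forall x, gp x = false -> gat Y.2 x ∘ f = ρm x f ∘ gat X.2 x.

Lemma fixhom_uT X Y f x D t : fixhom X Y f -> hfp R X -> hfp R Y -> gp x = false -> arrow D X.1 t ->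
  gat Y.2 x ∘ f ∘ t = ρm x f ∘ gat X.2 x ∘ t.
Proof.
move=> [hf Ef] hX hY ex ht.
rwl (compmA HC (f := gat Y.2 x)); rewrite Ef //; rw (compmA HC).
Qed.

Lemma fixhom_uVT X Y f x D t : fixhom X Y f -> hfp R X -> hfp R Y -> gp x = false ->
  arrow D (ρ x X.1) t ->
  f ∘ uV X x ∘ t = uV Y x ∘ ρm x f ∘ t.
Proof.
move=> [hf Ef] hX hY ex ht.
have -> : f ∘ uV X x ∘ t = uV Y x ∘ gat Y.2 x ∘ f ∘ uV X x ∘ t by cancel_pair.
rw (fixhom_uT (Y := Y) (conj hf Ef)); cancel_pair.
Qed.

Lemma fixhom_uV X Y f x : fixhom X Y f -> hfp R X -> hfp R Y -> gp x = false ->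
  f ∘ uV X x = uV Y x ∘ ρm x f.
Proof.
move=> F hX hY ex; have [hf _] := F.
have E := fixhom_uVT F hX hY ex (t := idm C (ρ x X.1)) (D := ρ x X.1).
have h1 : arrow (ρ x X.1) Y.1 (f ∘ uV X x) by arrow_solve.
have h2 : arrow (ρ x X.1) Y.1 (uV Y x ∘ ρm x f) by arrow_solve.
apply: (compm1_inj HC h1 h2); rw (compmA HC); rw (compmA HC); apply: E; arrow_solve.
Qed.

Lemma fixhom_hom X Y f : hfp R X -> hfp R Y -> fixhom X Y f -> hom (fixcat R) X Y f.
Proof.
move=> hX hY [[_ _ hf] Ef]; split=> // g.
have eg : gp (val g) = false := negbTE (valP g).
rewrite -(gat_val Y.2 g) -(gat_val X.2 g); exact: Ef.
Qed.

Lemma hom_fixhom X Y f : hfp R X -> hfp R Y -> hom (fixcat R) X Y f -> fixhom X Y f.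
Proof.
move=> hX hY [hf Ef]; split; first by split=> //; exact: hfp_ob.
move=> x ex; have px : ~~ gp x by rewrite ex.
by rewrite !(gat_Sub _ px) Ef.
Qed.

Lemma fixcat_dgiso X Y f g : hfp R X -> hfp R Y -> invpair X.1 Y.1 f g -> fixhom X Y f ->
  dgiso (fixcat R) X Y f.
Proof.
move=> hX hY P F; have oX := hfp_ob hX; have oY := hfp_ob hY.
have [[hf [df xf]] [hg _] e1 e2] := P.
split; first by split; [exact: fixhom_hom | exact: df | exact: xf].
exists g; split=> //; apply: fixhom_hom => //; split=> // x ex.
add_tail; comp_simpl.
cancel_left (ρm x f) (ρm x g); comp_simpl.
rwl (fixhom_uT (X := X) (Y := Y) (x := x) F); comp_simpl.
Qed.

(** * The functor rho(s) on fixed points *)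

Lemma Pobj_u s X x : gp x = false ->
  gat (Pobj R s X).2 x =
  thetaV x s X.1 ∘ θ s (gi s * (x * s)) X.1 ∘ ρm s (uV X (gi s * (x * s))).
Proof. by move=> ex; rewrite (gat_Sub _ (negbT ex)). Qed.

Lemma invpair_Pobj_u s X x : gp s = true -> hfp R X -> gp x = false ->
  invpair (ρ s X.1) (ρ x (ρ s X.1)) (gat (Pobj R s X).2 x)
    (ρm s (gat X.2 (gi s * x * s)) ∘ thetaV s (gi s * x * s) X.1 ∘ θ x s X.1).
Proof.
move=> es hX ex; have oX := hfp_ob hX.
rewrite Pobj_u //; gsimpl.
erewrite <- (compmA HC (f := ρm s (gat X.2 _))); try solve [side_solve].
eapply (invpair_comp HC); [eapply (invpair_comp HC); invpair_solve | invpair_solve].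
Qed.

Lemma Pobj_uV s X x : gp s = true -> hfp R X -> gp x = false ->
  uV (Pobj R s X) x = ρm s (gat X.2 (gi s * x * s)) ∘ thetaV s (gi s * x * s) X.1 ∘ θ x s X.1.
Proof. move=> es hX ex; apply/esym; exact: (invpair_invm HC (invpair_Pobj_u es hX ex)). Qed.

Lemma Pobj_cocycle s X x2 x1 : gp s = true -> hfp R X -> gp x2 = false -> gp x1 = false ->
  gat (Pobj R s X).2 (x2 * x1) =
  θ x2 x1 (ρ s X.1) ∘ ρm x2 (gat (Pobj R s X).2 x1) ∘ gat (Pobj R s X).2 x2.
Proof.
move=> es hX e2 e1; have oX := hfp_ob hX.
rewrite !Pobj_u //; last by rewrite (gpiM HG) e1 e2.
add_tail; comp_simpl.
rw (uV_cocycle (X := X) (x := gi s * x2 * s) (y := gi s * x1 * s)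
                        (xy := gi s * x2 * x1 * s)); comp_simpl.
rwl (theta_assoc_odd (a := s) (b := gi s * x2 * s) (c := gi s * x1 * s)); comp_simpl.
rw (theta_nat_odd (a := s) (b := gi s * x2 * s)); comp_simpl.
rwl (thetaV_nat_odd (a := x2) (b := s)); comp_simpl.
rw (theta_assoc_Vl_even (a := x2) (b := s) (c := gi s * x1 * s)); comp_simpl.
rw (theta_assoc_Vr_even (a := x2) (b := x1) (c := s)); comp_simpl.
Qed.

Lemma Pobj_hfp s X : gp s = true -> hfp R X -> hfp R (Pobj R s X).
Proof.
move=> es hX; have oX := hfp_ob hX; split.
- exact: ob_rho.
- move=> g; have eg : gp (val g) = false := negbTE (valP g).
  rewrite -gat_val; exact: (invpair_dgiso (invpair_Pobj_u es hX eg)).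
- move=> g2 g1; have e2 : gp (val g2) = false := negbTE (valP g2).
  have e1 : gp (val g1) = false := negbTE (valP g1).
  rewrite -(gat_val (Pobj R s X).2 g1) -(gat_val (Pobj R s X).2 g2).
  exact: Pobj_cocycle.
Qed.

Lemma Pobj_fixhom s X Y f : gp s = true -> hfp R X -> hfp R Y -> fixhom X Y f ->
  fixhom (Pobj R s Y) (Pobj R s X) (ρm s f).
Proof.
move=> es hX hY F; have [hf _] := F; have oX := hfp_ob hX; have oY := hfp_ob hY.
split; first by arrow_solve.
move=> x ex; rewrite !Pobj_u //; add_tail; comp_simpl.
set h := (gi s * x * s).
erewrite <- (compmA HC (f := ρm s (uV X h))); try solve [side_solve].
rwl (rho_comp_oddr (s := s) (f := f) (g := uV X h)).
rewrite (fixhom_uV F hX hY) //; last by rewrite /h; gpi_solve.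
comp_simpl.
rw (theta_nat_odd (a := s) (b := h)); comp_simpl.
rw (thetaV_nat_odd (a := x) (b := s)); comp_simpl.
Qed.

Lemma Pobj_dgfun s : gp s = true -> is_dgfun true (fixcat R) (fixcat R) (Pobj R s) (ρm s).
Proof.
move=> es; have Fs := r2_fun HR s; rewrite es in Fs.
split.
- move=> A hA; exact: Pobj_hfp.
- move=> A B f hA hB hf; apply: fixhom_hom; try exact: Pobj_hfp.
  apply: Pobj_fixhom => //; exact: hom_fixhom.
- move=> A B f g hA hB [hf _] [hg _]; exact: (fun_D Fs (hfp_ob hA) (hfp_ob hB) hf hg).
- move=> A B a f hA hB [hf _]; exact: (fun_Z Fs a (hfp_ob hA) (hfp_ob hB) hf).
- move=> A B i f hA hB [hf _] df; exact: (fun_deg Fs (hfp_ob hA) (hfp_ob hB) hf df).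
- move=> A B f hA hB [hf _]; exact: (fun_dif Fs (hfp_ob hA) (hfp_ob hB) hf).
- move=> A hA; exact: (fun_id Fs (hfp_ob hA)).
- move=> A B E i j f g hA hB hE [hf _] [hg _] df dg.
  exact: (fun_comp Fs (hfp_ob hA) (hfp_ob hB) (hfp_ob hE) hf hg df dg).
Qed.

Lemma id_dgfun : is_dgfun false (fixcat R) (fixcat R) (fun X => X) (fun f => f).
Proof.
split; intros; try assumption; reflexivity.
Qed.

(** * The duality Theta(s) *)

Lemma ThetaE s X : Theta R s X = thetaV s s X.1 ∘ gat X.2 (s * s).
Proof. by []. Qed.

Lemma invpair_Theta s X : hfp R X ->
  invpair X.1 (ρ s (ρ s X.1)) (Theta R s X) (uV X (s * s) ∘ θ s s X.1).
Proof.
move=> hX; have oX := hfp_ob hX; rewrite ThetaE.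
case es: (gp s).
all: eapply (invpair_comp HC); [invpair_solve | invpair_solve].
Qed.

Lemma Theta_fixhom s X : gp s = true -> hfp R X ->
  fixhom X (Pobj R s (Pobj R s X)) (Theta R s X).
Proof.
move=> es hX; have oX := hfp_ob hX; have hP := Pobj_hfp es hX.
split; first by rewrite ThetaE /=; arrow_solve.
move=> x ex; rewrite ThetaE Pobj_u //; rewrite Pobj_uV //; last by gpi_solve.
rewrite /=; add_tail; comp_simpl.
rwl (thetaV_nat_even (a := s) (b := s)); comp_simpl.
rw (hfp_cocycleVT (X := X) (x := s * s) (y := gi s * gi s * x * s * s)); comp_simpl.
rw (hfp_cocycleVT (X := X) (x := x) (y := s * s)); comp_simpl.
rw (thetaV_assoc_even (a := x) (b := s) (c := s)); comp_simpl.
rw (theta_assoc_Vr_odd (a := s) (b := gi s * x * s) (c := s)); comp_simpl.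
rwl (theta_assoc_odd (a := s) (b := s) (c := gi s * gi s * x * s * s)); comp_simpl.
Qed.

Lemma Theta_nat s X Y f : gp s = true -> hfp R X -> hfp R Y -> fixhom X Y f ->
  Theta R s Y ∘ f = ρm s (ρm s f) ∘ Theta R s X.
Proof.
move=> es hX hY F; have [hf _] := F; have oX := hfp_ob hX; have oY := hfp_ob hY.
rewrite !ThetaE; add_tail; comp_simpl.
rw (fixhom_uT (X := X) (Y := Y) (x := s * s) F); comp_simpl.
rw (thetaV_nat_even (a := s) (b := s)); comp_simpl.
Qed.

Lemma Theta_triangle s X : gp s = true -> hfp R X ->
  ρm s (Theta R s X) ∘ Theta R s (Pobj R s X) = idm C (ρ s X.1).
Proof.
move=> es hX; have oX := hfp_ob hX.
rewrite !ThetaE Pobj_u /=; last by gpi_solve.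
add_tail; comp_simpl.
rw (theta_assoc_Vl_odd (a := s) (b := s) (c := s)); comp_simpl.
Qed.

Lemma fixcat_duality s : gp s = true -> is_duality (fixcat R) (Pobj R s) (ρm s) (Theta R s).
Proof.
move=> es; split.
- exact: Pobj_dgfun.
- split; first split.
  + move=> A hA; have oA := hfp_ob hA; have [[hT [dT xT]] _ _ _] := invpair_Theta s hA.
    have hPP : hfp R (Pobj R s (Pobj R s A)) := Pobj_hfp es (Pobj_hfp es hA).
    split; [apply: fixhom_hom => //; exact: Theta_fixhom | exact: dT | exact: xT].
  + move=> A B f hA hB hf /=; apply: Theta_nat => //; exact: hom_fixhom.
  + move=> A hA; have hPP : hfp R (Pobj R s (Pobj R s A)) := Pobj_hfp es (Pobj_hfp es hA).
    apply: fixcat_dgiso => //; first exact: invpair_Theta.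
    exact: Theta_fixhom.
- move=> A hA /=; exact: Theta_triangle.
Qed.

(** * The comparison maps phi *)

Lemma phiE s1 s2 X : phi R s1 s2 X = ρm s2 (gat X.2 (gi s2 * s1)) ∘ thetaV s2 (gi s2 * s1) X.1.
Proof. by []. Qed.

Lemma invpair_phi s1 s2 X : gp s1 = true -> gp s2 = true -> hfp R X ->
  invpair (ρ s1 X.1) (ρ s2 X.1) (phi R s1 s2 X)
    (θ s2 (gi s2 * s1) X.1 ∘ ρm s2 (uV X (gi s2 * s1))).
Proof.
move=> e1 e2 hX; have oX := hfp_ob hX; rewrite phiE.
eapply (invpair_comp HC); [invpair_solve | invpair_solve].
Qed.

Lemma u_conj_comm X s1 s2 x : hfp R X -> gp s1 = true -> gp s2 = true -> gp x = false ->
  gat X.2 (gi s2 * s1) ∘ uV X (gi s2 * x * s2) =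
  ρm (gi s2 * s1) (uV X (gi s1 * x * s1)) ∘ thetaV (gi s2 * s1) (gi s1 * x * s1) X.1
    ∘ θ (gi s2 * x * s2) (gi s2 * s1) X.1 ∘ ρm (gi s2 * x * s2) (gat X.2 (gi s2 * s1)).
Proof.
move=> hX e1 e2 ex; have oX := hfp_ob hX.
add_tail; comp_simpl.
set a := gi s2 * s1; set y := gi s1 * x * s1.
cancel_left (ρm a (gat X.2 y)) (ρm a (uV X y)); comp_simpl.
cancel_left (θ a y X.1) (thetaV a y X.1); comp_simpl.
rw (hfp_cocycleT (X := X) (x := a) (y := y) (xy := gi s2 * x * s1)); comp_simpl.
rw (hfp_cocycle (X := X) (x := gi s2 * x * s2) (y := a) (xy := gi s2 * x * s1)); comp_simpl.
Qed.

Lemma phi_fixhom s1 s2 X : gp s1 = true -> gp s2 = true -> hfp R X ->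
  fixhom (Pobj R s1 X) (Pobj R s2 X) (phi R s1 s2 X).
Proof.
move=> e1 e2 hX; have oX := hfp_ob hX.
split; first by rewrite phiE /=; arrow_solve.
move=> x ex; rewrite !Pobj_u // phiE /=; add_tail; comp_simpl.
set t := gi s2 * s1.
erewrite <- (compmA HC (f := ρm s2 (uV X _))); try solve [side_solve].
rwl (rho_comp_oddl (s := s2) (f := gat X.2 t)).
rewrite /t (u_conj_comm hX e1 e2 ex); comp_simpl.
rw (theta_nat_odd (a := s2) (b := gi s2 * x * s2)); comp_simpl.
rwl (thetaV_nat_odd (a := s2) (b := gi s2 * s1)); comp_simpl.
rw (thetaV_nat_odd (a := x) (b := s2)); comp_simpl.
rw (theta_assoc_Vr_odd (a := s2) (b := gi s2 * x * s2) (c := gi s2 * s1)); comp_simpl.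
rw (theta_assoc_Vl_odd (a := s2) (b := gi s2 * s1) (c := gi s1 * x * s1)); comp_simpl.
rw (thetaV_assoc_even (a := x) (b := s2) (c := gi s2 * s1)); comp_simpl.
Qed.

Lemma phi_nat s1 s2 X Y f : gp s1 = true -> gp s2 = true -> hfp R X -> hfp R Y -> fixhom X Y f ->
  phi R s1 s2 X ∘ ρm s1 f = ρm s2 f ∘ phi R s1 s2 Y.
Proof.
move=> e1 e2 hX hY F; have [hf Ef] := F; have oX := hfp_ob hX; have oY := hfp_ob hY.
rewrite !phiE; add_tail; comp_simpl.
rw (thetaV_nat_odd (a := s2) (b := gi s2 * s1)); comp_simpl.
erewrite <- (compmA HC (f := ρm s2 (gat X.2 _))); try solve [side_solve].
rwl (rho_comp_oddr (s := s2) (g := gat X.2 (gi s2 * s1))).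
rewrite -Ef; last by gpi_solve.
comp_simpl.
Qed.

Lemma phi_Theta s1 s2 X : gp s1 = true -> gp s2 = true -> hfp R X ->
  ρm s2 (phi R s1 s2 X) ∘ Theta R s2 X = phi R s1 s2 (Pobj R s1 X) ∘ Theta R s1 X.
Proof.
move=> e1 e2 hX; have oX := hfp_ob hX; have hP := Pobj_hfp e1 hX.
rewrite !phiE !ThetaE Pobj_u /=; last by gpi_solve.
add_tail; comp_simpl.
rwl (thetaV_nat_even (a := s2) (b := s2)); comp_simpl.
rw (hfp_cocycleVT (X := X) (x := s2 * s2) (y := gi s2 * s1)); comp_simpl.
rw (theta_assoc_Vl_odd (a := s2) (b := s2) (c := gi s2 * s1)); comp_simpl.
rw (hfp_cocycle (X := X) (x := s2 * s1) (y := gi s1 * gi s2 * s1 * s1) (xy := s1 * s1)); comp_simpl.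
rw (theta_assoc_Vl_odd (a := s2) (b := gi s2 * s1) (c := s1)); comp_simpl.
rwl (theta_assoc_Vl_odd (a := s2) (b := s1) (c := gi s1 * gi s2 * s1 * s1)); comp_simpl.
rw (thetaV_nat_even (a := s2) (b := s1)); comp_simpl.
Qed.

Lemma phi_cocycle s1 s2 s3 X : gp s1 = true -> gp s2 = true -> gp s3 = true -> hfp R X ->
  phi R s1 s3 X = phi R s2 s3 X ∘ phi R s1 s2 X.
Proof.
move=> e1 e2 e3 hX; have oX := hfp_ob hX.
rewrite !phiE; add_tail; comp_simpl.
rw (thetaV_nat_odd (a := s3) (b := gi s3 * s2)); comp_simpl.
erewrite <- (compmA HC (f := ρm s3 (gat X.2 (gi s3 * s2)))); try solve [side_solve].
rwl (rho_comp_oddl (s := s3) (f := ρm (gi s3 * s2) (gat X.2 (gi s2 * s1)))).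
rewrite (hfp_cocycleV (X := X) (x := gi s3 * s2) (y := gi s2 * s1) (xy := gi s3 * s1)) //;
  try gpi_solve; try (gsimpl; reflexivity).
comp_simpl.
rw (theta_assoc_Vl_odd (a := s3) (b := gi s3 * s2) (c := gi s2 * s1)); comp_simpl.
Qed.

Lemma phi_form_equiv s1 s2 : gp s1 = true -> gp s2 = true ->
  is_form_equiv (fixcat R) (fixcat R)
       (Pobj R s1) (ρm s1) (Theta R s1)
       (Pobj R s2) (ρm s2) (Theta R s2)
       (fun X => X) (fun f => f) (phi R s1 s2).
Proof.
move=> e1 e2; split.
- split.
  + exact: id_dgfun.
  + split.
    * move=> A hA; have [[hp [dp xp]] _ _ _] := invpair_phi e1 e2 hA.
      have h1 := Pobj_hfp e1 hA; have h2 := Pobj_hfp e2 hA.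
      split; [apply: fixhom_hom => //; exact: phi_fixhom | exact: dp | exact: xp].
    * move=> A B f hA hB hf /=; apply: phi_nat => //; exact: hom_fixhom.
  + move=> A hA /=; exact: phi_Theta.
- split.
  + exact: id_dgfun.
  + move=> A B f' hA hB hf; exists f'; split=> //; by move=> y [_ ->].
  + move=> B hB; exists B; split=> //; exists (idm C B.1).
    have oB := hfp_ob hB.
    apply: fixcat_dgiso => //.
      split; [exact: dgmor_idm | exact: dgmor_idm | rw (comp1m HC) | rw (comp1m HC)].
    split; first by arrow_solve.
    move=> x ex; rewrite rho_idm //; rw (comp1m HC); rw (compm1 HC).
- move=> A hA; have h1 := Pobj_hfp e1 hA; have h2 := Pobj_hfp e2 hA.
  apply: fixcat_dgiso => //; first exact: (invpair_phi e1 e2 hA).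
  exact: phi_fixhom.
Qed.

End RealRepresentation.
Theorem mainTheorem12 (k : fieldType) (C : dgcat k) (Gh : c2group)
    (R : r2rep C Gh) :
  (2%:R : k) != 0 -> is_dgcat C -> is_c2group Gh -> is_r2rep R ->
  (* (i) *)
  (forall s, gpi Gh s ->
     is_duality (fixcat R) (Pobj R s) (rho_m R s) (Theta R s)) /\
  (* (ii) form equivalences *)
  (forall s1 s2, gpi Gh s1 -> gpi Gh s2 ->
     is_form_equiv (fixcat R) (fixcat R)
       (Pobj R s1) (rho_m R s1) (Theta R s1)
       (Pobj R s2) (rho_m R s2) (Theta R s2)
       (fun X => X) (fun f => f) (phi R s1 s2)) /\
  (* (ii) cocycle identity (id, phi13) = (id, phi23) o (id, phi12) *)
  (forall s1 s2 s3, gpi Gh s1 -> gpi Gh s2 -> gpi Gh s3 ->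
     forall X, ob (fixcat R) X ->
       phi R s1 s3 X =
       form_comp_nt (fixcat R) (fixcat R) (fixcat R)
         (fun Y => Y) (fun f => f) (phi R s2 s3) (phi R s1 s2) X).
Proof.
move=> _ HC HG HR; split; [|split].
- by move=> s es; exact: (fixcat_duality HC HG HR es).
- by move=> s1 s2 e1 e2; exact: (phi_form_equiv HC HG HR e1 e2).
- move=> s1 s2 s3 e1 e2 e3 X hX.
  exact: (phi_cocycle HC HG HR e1 e2 e3 hX).
Qed.
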